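(* Let $P$ be a positive event pattern, $I$ an event stream, $G=(V,\mathcal{E})$ the GRETA graph of $P$ and $I$, $E$ an event type, and suppose every event of type $E$ carries a real-valued attribute $attr$. For $e \in V$ let $Pr(e)=\{p\in V:(p,e)\in\mathcal{E}\}$, let $End=\{e \in V : e.type = end(P)\}$, and let $e.count$ be defined recursively in increasing time order by $e.count = [e.type=start(P)] + \sum_{p\in Pr(e)} p.count$. Define recursively in increasing time order, for $e \in V$: if $e.type = E$: $e.count_E = e.count + \sum_{p\in Pr(e)} p.count_E$, $e.min = \min(\{e.attr\}\cup\{p.min : p\in Pr(e)\})$, $e.max = \max(\{e.attr\}\cup\{p.max : p\in Pr(e)\})$, $e.sum = e.attr\cdot e.count + \sum_{p\in Pr(e)} p.sum$; if $e.type \neq E$: $e.count_E = \sum_{p\in Pr(e)} p.count_E$, $e.min = \min_{p\in Pr(e)} p.min$, $e.max = \max_{p\in Pr(e)} p.max$, $e.sum = \sum_{p\in Pr(e)} p.sum$ (with $\min\emptyset = +\infty$, $\max\emptyset=-\infty$, empty sums $=0$). Then $\mathsf{COUNT}(E) = \sum_{e\in End} e.count_E$, $\mathsf{MIN}(E.attr) = \min_{e\in End} e.min$, $\mathsf{MAX}(E.attr) = \max_{e\in End} e.max$, $\mathsf{SUM}(E.attr) = \sum_{e\in End} e.sum$, and $\mathsf{AVG}(E.attr) = \mathsf{SUM}(E.attr)/\mathsf{COUNT}(E)$.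
   Context: Events: each event $e$ has an event type $e.type$ and an occurrence time $e.time \in \mathbb{Q}_{\ge 0}$. An event stream $I$ is a finite collection of distinct events arriving in nondecreasing order of time. Positive patterns: an event type $E$ is a pattern; if $P_i,P_j$ are patterns then $P_i+$ and $\mathsf{SEQ}(P_i,P_j)$ are patterns; each event type occurs at most once in a pattern. Matches over $I$: $matches(E)=\{(e): e\in I, e.type=E\}$; $(e_1,\dots,e_k)\in matches(\mathsf{SEQ}(P_i,P_j))$ iff for some $1\le m\le k$, $(e_1,\dots,e_m)\in matches(P_i)$, $(e_{m+1},\dots,e_k)\in matches(P_j)$ and $e_1.time<\dots<e_k.time$; $matches(P_i+)$ consists of concatenations $s_1\cdots s_k$ ($k\ge1$) with each $s_l\in matches(P_i)$ and the last event of $s_l$ strictly earlier than the first event of $s_{l+1}$. Trends matched by $P$ in $I$ are the elements of $matches(P)$. Define $start(E)=end(E)=E$, $start(P_i+)=start(P_i)$, $end(P_i+)=end(P_i)$, $start(\mathsf{SEQ}(P_i,P_j))=start(P_i)$, $end(\mathsf{SEQ}(P_i,P_j))=end(P_j)$. The GRETA graph $G=(V,\mathcal{E})$ has as vertices the events of $I$ occurring in at least one trend matched by $P$ in $I$, and an edge $(e_i,e_j)$ iff $e_i,e_j$ are consecutive events, in this order, in some trend matched by $P$ in $I$. Aggregates over all trends matched by $P$ in $I$: $\mathsf{COUNT}(E)$ is the total number of occurrences of events of type $E$ in all trends (summed over trends); $\mathsf{MIN}(E.attr)$ ($\mathsf{MAX}(E.attr)$) is the minimum (maximum) of $attr$ over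 all events of type $E$ in all trends; $\mathsf{SUM}(E.attr)$ is the sum, over all trends and all events of type $E$ in each trend, of $attr$; $\mathsf{AVG}(E.attr)=\mathsf{SUM}(E.attr)/\mathsf{COUNT}(E)$. *)

From HB Require Import structures.
From mathcomp Require Import all_boot all_order all_algebra.
From mathcomp Require Import boolp classical_sets fsbigop reals constructive_ereal ereal.

Set Implicit Arguments.
Unset Strict Implicit.
Unset Printing Implicit Defensive.
Import Order.TTheory GRing.Theory Num.Theory.

Local Open Scope classical_set_scope.
Local Open Scope ring_scope.

Inductive pattern (T : Type) : Type :=
| PType of T
| PPlus of pattern T
| PSeq of pattern T & pattern T.

Arguments PType {T}.
Arguments PPlus {T}.
Arguments PSeq {T}.

Fixpoint ptypes (T : Type) (P : pattern T) : seq T :=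
  match P with
  | PType E => [:: E]
  | PPlus Q => ptypes Q
  | PSeq Q1 Q2 => ptypes Q1 ++ ptypes Q2
  end.

Definition wf_pattern (T : eqType) (P : pattern T) : bool := uniq (ptypes P).

Fixpoint pstart (T : Type) (P : pattern T) : T :=
  match P with
  | PType E => E
  | PPlus Q => pstart Q
  | PSeq Q1 _ => pstart Q1
  end.

Fixpoint pend (T : Type) (P : pattern T) : T :=
  match P with
  | PType E => E
  | PPlus Q => pend Q
  | PSeq _ Q2 => pend Q2
  end.

Section Matches.
Variables (T : eqType) (Ev : choiceType) (typ : Ev -> T) (time : Ev -> rat).
Variable I : seq Ev.

Definition time_increasing (s : seq Ev) : bool :=
  sorted (fun x y => time x < time y) s.

Inductive matches : pattern T -> seq Ev -> Prop :=
| MType (E : T) (e : Ev) :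
    e \in I -> typ e = E -> matches (PType E) [:: e]
| MSeq (P1 P2 : pattern T) (s1 s2 : seq Ev) :
    matches P1 s1 -> matches P2 s2 -> time_increasing (s1 ++ s2) ->
    matches (PSeq P1 P2) (s1 ++ s2)
| MPlus1 (P : pattern T) (s : seq Ev) :
    matches P s -> matches (PPlus P) s
| MPlusS (P : pattern T) (s1 : seq Ev) (a b : Ev) (s2 : seq Ev) :
    matches P (rcons s1 a) -> matches (PPlus P) (b :: s2) -> time a < time b ->
    matches (PPlus P) (rcons s1 a ++ b :: s2).

Definition trends (P : pattern T) : set (seq Ev) := [set s | matches P s].

Definition greta_vertex (P : pattern T) (e : Ev) : Prop :=
  exists2 s, matches P s & e \in s.

Definition greta_edge (P : pattern T) (ei ej : Ev) : Prop :=
  exists2 s, matches P s & exists s1 s2, s = s1 ++ ei :: ej :: s2.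

Definition preds (P : pattern T) (e : Ev) : set Ev :=
  [set p | greta_vertex P p /\ greta_edge P p e].

Definition end_vertices (P : pattern T) : set Ev :=
  [set e | greta_vertex P e /\ typ e = pend P].

Definition agg_COUNT (P : pattern T) (E : T) : nat :=
  \big[addn/0%N]_(s \in trends P) count (fun e => typ e == E) s.

Variable R : realType.
Variable attr : Ev -> R.

Definition agg_SUM (P : pattern T) (E : T) : R :=
  \sum_(s \in trends P) \sum_(e <- s | typ e == E) attr e.

(* min / max over all E-events in all trends; min of empty = +oo, max of empty = -oo *)
Definition agg_MIN (P : pattern T) (E : T) : \bar R :=
  ereal_inf [set (attr e)%:E | e in [set e | typ e = E /\
                                   exists2 s, matches P s & e \in s]].

Definition agg_MAX (P : pattern T) (E : T) : \bar R :=
  ereal_sup [set (attr e)%:E | e in [set e | typ e = E /\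
                                   exists2 s, matches P s & e \in s]].

Definition agg_AVG (P : pattern T) (E : T) : R :=
  agg_SUM P E / (agg_COUNT P E)%:R.

End Matches.

From Pilot Require Import Defs.
From HB Require Import structures.
From mathcomp Require Import all_boot all_order all_algebra.
From mathcomp Require Import boolp classical_sets fsbigop reals constructive_ereal ereal cardinality.
From mathcomp Require Import ring zify.
Import Order.TTheory GRing.Theory Num.Theory.

Set Implicit Arguments.
Unset Strict Implicit.
Unset Printing Implicit Defensive.

Local Open Scope classical_set_scope.
Local Open Scope ring_scope.

(* Since every event type occurs at most once in P, the words of event types
   described by P can be spliced: if two of them share a letter a, the part of
   the first before a followed by the part of the second after a is again such
   a word.  Consequently the prefixes of trends that end in a vertex e are [e]
   (when e has type start(P)) and the extensions s ++ [e] of the prefixes s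
   ending in the predecessors of e, all of them distinct.  Each recursion of the
   statement therefore computes the corresponding aggregate over the prefixes
   ending in e; this is proved by induction along predecessors, which occur
   strictly earlier.  A trend is exactly a prefix ending in an End vertex, so
   combining over End gives the aggregates over all trends. *)

Lemma split_cat_cons (T : eqType) (x y w1 w2 : seq T) (a : T) :
  x ++ a :: y = w1 ++ w2 ->
  (exists y1, w1 = x ++ a :: y1 /\ y = y1 ++ w2) \/
  (exists x2, x = w1 ++ x2 /\ w2 = x2 ++ a :: y).
Proof.
elim: x w1 => [|z x IH] [|c w1] /=.
- by move=> <-; right; exists [::].
- by case=> -> ->; left; exists w1.
- by move=> <-; right; exists (z :: x).
- case=> -> /IH [[y1 [-> ->]]|[x2 [-> ->]]]; first by left; exists y1.
  by right; exists x2.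
Qed.

Lemma map_eq_cat (A B : Type) (f : A -> B) s w1 w2 : map f s = w1 ++ w2 ->
  exists s1 s2, [/\ s = s1 ++ s2, map f s1 = w1 & map f s2 = w2].
Proof.
move=> eq_s; exists (take (size w1) s), (drop (size w1) s).
by rewrite cat_take_drop map_take map_drop eq_s take_size_cat ?drop_size_cat.
Qed.

Lemma sub_count_lt (T : eqType) (a1 a2 : pred T) s x :
  subpred a1 a2 -> x \in s -> a2 x -> ~~ a1 x -> (count a1 s < count a2 s)%N.
Proof.
move=> sub12; elim: s => [|y s IH] //=; rewrite inE => /orP[/eqP <-|xs] a2x a1x.
  by rewrite a2x (negbTE a1x) add0n add1n ltnS sub_count.
have := IH xs a2x a1x; case: (a1 y) (sub12 y) => [->//|_] /=.
by rewrite add0n => /leq_trans; apply; apply: leq_addl.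
Qed.

Lemma finite_bounded_seqs (T : eqType) (r : seq T) n :
  finite_set [set s : seq T | (size s <= n)%N /\ {subset s <= r}].
Proof.
elim: n => [|n IH].
  by apply: (sub_finite_set _ (finite_set1 [::])) => -[|x s] [].
have : finite_set ([set [::]] `|` [set x :: s | x in [set` r] & s in
                   [set s : seq T | (size s <= n)%N /\ {subset s <= r}]]).
  by rewrite finite_setU; split; [apply: finite_set1|apply: finite_image2].
apply: sub_finite_set => -[|x s] /= [sz sr]; [by left|right].
exists x; first by apply: sr; rewrite mem_head.
by exists s => //; split => // y ys; apply: sr; rewrite inE ys orbT.
Qed.

Lemma natr_fsbig (R : pzSemiRingType) (J : choiceType) (A : set J) (F : J -> nat) :
  finite_set A -> ((\big[addn/0%N]_(x \in A) F x)%:R : R) = \sum_(x \in A) ((F x)%:R : R).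
Proof. by move=> finA; rewrite !fsbig_finite // natr_sum. Qed.

Lemma fsbig_bigcup (R : Type) (idx : R) (op : Monoid.com_law idx) (J K : choiceType)
    (A : set J) (B : J -> set K) (F : K -> R) :
  finite_set A -> (forall j, A j -> finite_set (B j)) -> trivIset A B ->
  \big[op/idx]_(k \in \bigcup_(j in A) B j) F k =
  \big[op/idx]_(j \in A) \big[op/idx]_(k \in B j) F k.
Proof.
move=> finA finB trivB; have finU := bigcup_finite finA finB.
transitivity (\big[op/idx]_(k \in \bigcup_(j in A) B j)
                \big[op/idx]_(j \in A) if k \in B j then F k else idx).
  apply: eq_fsbigr => k /set_mem[j Aj Bjk].
  rewrite (fsbigD1 j) //= ifT ?inE // fsbig1 ?Monoid.mulm1 // => i [Ai /= ij].
  case: ifP => // /set_mem Bik; case: ij; apply: trivB => //.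
  by exists k.
rewrite exchange_fsbig //; apply: eq_fsbigr => j /set_mem Aj.
by rewrite -fsbig_mkcondr setIidr // => k Bjk; exists j.
Qed.

Section ErealInfSup.
Variable R : realType.
Local Open Scope ereal_scope.

Lemma ereal_inf_setU_bigcup (J : Type) (X : set (\bar R)) (A : set J) (S : J -> set (\bar R)) :
  ereal_inf (X `|` \bigcup_(j in A) S j) = ereal_inf (X `|` [set ereal_inf (S j) | j in A]).
Proof.
apply/le_anti/andP; split; apply: le_ereal_inf_tmp => y [Xy|].
- by apply: ereal_inf_lbound; left.
- move=> [j Aj <-]; apply: le_ereal_inf_tmp => z Sz.
  by apply: ereal_inf_lbound; right; exists j.
- by apply: ereal_inf_lbound; left.
- move=> [j Aj Sy]; apply: le_trans (ereal_inf_lbound Sy).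
  by apply: ereal_inf_lbound; right; exists j.
Qed.

Lemma ereal_sup_setU_bigcup (J : Type) (X : set (\bar R)) (A : set J) (S : J -> set (\bar R)) :
  ereal_sup (X `|` \bigcup_(j in A) S j) = ereal_sup (X `|` [set ereal_sup (S j) | j in A]).
Proof.
apply/le_anti/andP; split; apply: ge_ereal_sup => y [Xy|].
- by apply: ereal_sup_ubound; left.
- move=> [j Aj Sy]; apply: le_trans (ereal_sup_ubound Sy) _.
  by apply: ereal_sup_ubound; right; exists j.
- by apply: ereal_sup_ubound; left.
- move=> [j Aj <-]; apply: ge_ereal_sup => z Sz.
  by apply: ereal_sup_ubound; right; exists j.
Qed.

End ErealInfSup.

Section PatternLanguage.
Variable T : eqType.
Implicit Types (P : pattern T) (w : seq T).

Inductive lang : pattern T -> seq T -> Prop :=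
| LType E : lang (PType E) [:: E]
| LSeq P1 P2 w1 w2 : lang P1 w1 -> lang P2 w2 -> lang (PSeq P1 P2) (w1 ++ w2)
| LPlus1 P w : lang P w -> lang (PPlus P) w
| LPlusS P w1 w2 : lang P w1 -> lang (PPlus P) w2 -> lang (PPlus P) (w1 ++ w2).

Definition lang_star P w := w = [::] \/ lang (PPlus P) w.

Lemma lang_ptypes P w : lang P w -> {subset w <= ptypes P}.
Proof.
elim=> //= [E x|P1 P2 w1 w2 _ H1 _ H2 x|P1 w1 w2 _ H1 _ H2 x].
- by rewrite inE => /eqP ->.
- by rewrite !mem_cat => /orP[/H1->|/H2->]; rewrite ?orbT.
- by rewrite mem_cat => /orP[/H1|/H2].
Qed.

Lemma lang_pstart P w : lang P w -> exists w', w = pstart P :: w'.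
Proof.
elim=> //= [E|P1 P2 w1 w2 _ [w' ->] _ _|P1 w1 w2 _ [w' ->] _ _].
- by exists [::].
- by exists (w' ++ w2).
- by exists (w' ++ w2).
Qed.

Lemma lang_pend P w : lang P w -> exists w', w = rcons w' (pend P).
Proof.
elim=> //= [E|P1 P2 w1 w2 _ _ _ [w' ->]|P1 w1 w2 _ _ _ [w' ->]].
- by exists [::].
- by exists (w1 ++ w'); rewrite rcons_cat.
- by exists (w1 ++ w'); rewrite rcons_cat.
Qed.

Lemma lang_neq_nil P w : lang P w -> w <> [::].
Proof. by move=> /lang_pstart [w' ->]. Qed.

Lemma lang_PType E w : lang (PType E) w -> w = [:: E].
Proof. by move=> H; inversion H. Qed.

Lemma lang_PSeq P1 P2 w : lang (PSeq P1 P2) w ->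
  exists w1 w2, [/\ w = w1 ++ w2, lang P1 w1 & lang P2 w2].
Proof. by move=> H; inversion H; exists w1, w2. Qed.

Lemma lang_plus_cat P u v :
  lang (PPlus P) u -> lang (PPlus P) v -> lang (PPlus P) (u ++ v).
Proof.
move eqQ: (PPlus P) => Q Hu; elim: Hu eqQ v => // {Q u}.
- by move=> Q u Hu _ _ v; apply: LPlusS.
- move=> Q u1 u2 H1 _ _ IH eqQ v Hv; rewrite -catA; apply: LPlusS => //.
  exact: IH.
Qed.

Lemma lang_star_plus_cat P u v :
  lang_star P u -> lang (PPlus P) v -> lang (PPlus P) (u ++ v).
Proof. by case=> [->//|Hu]; apply: lang_plus_cat. Qed.

Lemma lang_cat_star P u v : lang P u -> lang_star P v -> lang (PPlus P) (u ++ v).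
Proof. by move=> Hu [->|Hv]; [rewrite cats0; apply: LPlus1|apply: LPlusS]. Qed.

Lemma lang_plus_split P x a y : lang (PPlus P) (x ++ a :: y) ->
  exists x0 x1 y1 y0, [/\ x = x0 ++ x1, y = y1 ++ y0, lang_star P x0,
     lang P (x1 ++ a :: y1) & lang_star P y0].
Proof.
move eqQ: (PPlus P) => Q Hw; move eqw: (x ++ a :: y) Hw => w Hw.
elim: Hw eqQ x y eqw => // {Q w}.
- move=> Q w Hw _ [->] x y eqw; exists [::], x, y, [::].
  by rewrite cats0 eqw; split => //; left.
- move=> Q w1 w2 H1 _ H2 IH [eqPQ] x y /split_cat_cons; subst Q.
  case=> [[y1 [eq1 ->]]|[x2 [-> eq2]]].
    by exists [::], x, y1, w2; rewrite -eq1; split => //; [left|right].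
  have [x0 [x1 [y1 [y0 [-> -> Hx0 H Hy0]]]]] := IH erefl _ _ (esym eq2).
  exists (w1 ++ x0), x1, y1, y0; rewrite catA; split => //.
  by right; apply: lang_cat_star.
Qed.

Lemma lang_splice P x a y x' y' : wf_pattern P ->
  lang P (x ++ a :: y) -> lang P (x' ++ a :: y') -> lang P (x ++ a :: y').
Proof.
rewrite /wf_pattern.
elim: P x y x' y' => [E|Q IH|P1 IH1 P2 IH2] x y x' y' /= uniqP.
- move=> /lang_PType H1 /lang_PType H2.
  case: x H1 => [|? [|]] //= [-> _]; case: x' H2 => [|? [|]] //= [_ ->].
  exact: LType.
- move=> /lang_plus_split [x0 [x1 [y1 [y0 [-> _ Hx0 H1 _]]]]].
  move=> /lang_plus_split [x0' [x1' [y1' [y0' [_ -> _ H1' Hy0']]]]].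
  rewrite -catA -cat_cons [x1 ++ _]catA; apply: lang_star_plus_cat => //.
  exact: lang_cat_star (IH _ _ _ _ uniqP H1 H1') Hy0'.
- move: uniqP; rewrite cat_uniq => /and3P[uniq1 /hasPn disj uniq2].
  have disjoint_letters b w1 w2 : lang P1 w1 -> lang P2 w2 -> b \in w1 -> b \in w2 -> False.
    move=> /lang_ptypes L1 /lang_ptypes L2 /L1 b1 /L2 b2.
    by have := disj _ b2; rewrite b1.
  move=> /lang_PSeq [u1 [u2 [eq_u L1 L2]]] /lang_PSeq [v1 [v2 [eq_v M1 M2]]].
  case: (split_cat_cons eq_u) => [[z [Eu1 Ey]]|[z [Ex Eu2]]];
  case: (split_cat_cons eq_v) => [[z' [Ev1 Ey']]|[z' [Ex' Ev2]]]; subst.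
  + by rewrite -cat_cons catA; exact: LSeq (IH1 _ _ _ _ uniq1 L1 M1) M2.
  + by case: (disjoint_letters a _ _ L1 M2); rewrite ?mem_cat mem_head ?orbT.
  + by case: (disjoint_letters a _ _ M1 L2); rewrite ?mem_cat mem_head ?orbT.
  + by rewrite -catA; exact: LSeq L1 (IH2 _ _ _ _ uniq2 L2 M2).
Qed.

End PatternLanguage.

Section Trends.
Variables (T : eqType) (Ev : choiceType) (typ : Ev -> T) (time : Ev -> rat).
Variable I : seq Ev.

Local Notation matches := (matches typ time I).
Local Notation time_increasing := (time_increasing time).

Lemma time_increasing_uniq s : time_increasing s -> uniq s.
Proof.
apply: sorted_uniq; last by move=> x; rewrite /= ltxx.
by move=> y x z /= /lt_trans; apply.
Qed.

Lemma matchesP Q s : matches Q s <->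
  [/\ {subset s <= I}, time_increasing s & lang Q (map typ s)].
Proof.
split.
  elim=> {Q s} [E e eI <-|P1 P2 s1 s2 _ [I1 _ L1] _ [I2 _ L2] ti12|Q s _ [Is tis Ls]|].
  - by split=> [x|//|]; [rewrite inE => /eqP ->|exact: LType].
  - split=> //; last by rewrite map_cat; apply: LSeq.
    by move=> x; rewrite mem_cat => /orP[/I1|/I2].
  - by split=> //; apply: LPlus1.
  move=> Q s1 a b s2 _ [I1 ti1 L1] _ [I2 ti2 L2] ab; split.
  - by move=> x; rewrite mem_cat => /orP[/I1|/I2].
  - move: ti1 ti2; rewrite /Defs.time_increasing cat_rcons sorted_cat_cons.
    by move=> -> /= ->; rewrite ab.
  - by rewrite map_cat; apply: LPlusS.
move=> [+ + L]; move eqw: (map typ s) L => w L.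
elim: L s eqw => {Q w} [E|P1 P2 w1 w2 _ IH1 _ IH2|Q w _ IH|Q w1 w2 L1 IH1 L2 IH2] s.
- by case: s => [|e [|]] //= [<-] sI _; apply: MType => //; apply: sI; rewrite mem_head.
- move=> /map_eq_cat[s1 [s2 [-> eq1 eq2]]] sI ti12.
  have [ti1 ti2] := cat_sorted2 ti12.
  apply: MSeq => //; [apply: IH1 eq1 _ ti1|apply: IH2 eq2 _ ti2];
    by move=> x xs; apply: sI; rewrite mem_cat xs ?orbT.
- by move=> eqw sI tis; apply: MPlus1; apply: IH.
move=> /map_eq_cat[s1 [s2 [-> eq1 eq2]]] sI ti12.
have I1 : {subset s1 <= I} by move=> x xs; apply: sI; rewrite mem_cat xs.
have I2 : {subset s2 <= I} by move=> x xs; apply: sI; rewrite mem_cat xs orbT.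
have [ti1 ti2] := cat_sorted2 ti12; clear sI.
case/lastP: s1 eq1 I1 ti1 ti12 => [eq1|s1 a eq1 I1 ti1]; first by case: (lang_neq_nil L1).
case: s2 eq2 I2 ti2 => [eq2|b s2 eq2 I2 ti2]; first by case: (lang_neq_nil L2).
rewrite /Defs.time_increasing cat_rcons sorted_cat_cons /= => /and3P[_ ab _].
by rewrite -cat_rcons; apply: MPlusS => //; [apply: IH1|apply: IH2].
Qed.

Variable P : pattern T.
Hypothesis wfP : wf_pattern P.

Local Notation V := (greta_vertex typ time I P).
Local Notation Pr := (preds typ time I P).
Local Notation End := (end_vertices typ time I P).

Lemma matches_splice x a y x' y' :
  matches P (x ++ a :: y) -> matches P (x' ++ a :: y') -> matches P (x ++ a :: y').
Proof.
move=> /matchesP[I1 ti1 L1] /matchesP[I2 ti2 L2]; apply/matchesP; split.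
- move=> z; rewrite mem_cat inE => /or3P[zx|/eqP->|zy'].
  + by apply: I1; rewrite mem_cat zx.
  + by apply: I2; rewrite mem_cat mem_head orbT.
  + by apply: I2; rewrite mem_cat inE zy' !orbT.
- move: ti1 ti2; rewrite /Defs.time_increasing !sorted_cat_cons.
  by case/andP => -> _ /andP[_ ->].
- by move: L1 L2; rewrite !map_cat /=; apply: lang_splice.
Qed.

Definition prefixes (e : Ev) : set (seq Ev) :=
  [set s | (exists s0, s = rcons s0 e) /\ exists t, matches P (s ++ t)].

Lemma vertex_in_stream e : V e -> e \in I.
Proof. by case=> s /matchesP[sI _ _] /sI. Qed.

Lemma finite_preds e : finite_set (Pr e).
Proof. by apply: (sub_finite_set _ (finite_seq I)) => p [/vertex_in_stream]. Qed.

Lemma finite_end_vertices : finite_set End.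
Proof. by apply: (sub_finite_set _ (finite_seq I)) => p [/vertex_in_stream]. Qed.

Lemma finite_prefixes e : finite_set (prefixes e).
Proof.
apply: (sub_finite_set _ (finite_bounded_seqs I (size I))) => s [_ [t]].
move=> /matchesP[stI /cat_sorted2[tis _] _].
have sI : {subset s <= I} by move=> x xs; apply: stI; rewrite mem_cat xs.
by split=> //; apply: uniq_leq_size => //; apply: time_increasing_uniq.
Qed.

Lemma preds_time_lt e p : Pr e p -> time p < time e.
Proof.
move=> [_ [u /matchesP[_ tiu _] [u1 [u2 equ]]]].
by move: tiu; rewrite equ => /cat_sorted2[_] /= /andP[].
Qed.

Definition stream_rank e := count (fun x => time x < time e) I.

Lemma preds_rank_lt e p : Pr e p -> (stream_rank p < stream_rank e)%N.
Proof.
move=> pe; apply: (sub_count_lt (x := p)) => /=.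
- by move=> x /lt_trans; apply; apply: preds_time_lt pe.
- by case: pe => /vertex_in_stream.
- exact: preds_time_lt pe.
- by rewrite ltxx.
Qed.

Lemma greta_vertex_ind (Q : Ev -> Prop) :
  (forall e, V e -> (forall p, Pr e p -> Q p) -> Q e) -> forall e, V e -> Q e.
Proof.
move=> step; suff rank_ind n e : (stream_rank e < n)%N -> V e -> Q e.
  by move=> e; apply: (rank_ind (stream_rank e).+1).
elim: n e => [//|n IH] e lt_en Ve; apply: step => // p pe.
apply: IH; last by case: pe.
by apply: leq_trans (preds_rank_lt pe) _; rewrite -ltnS.
Qed.

Lemma vertex_prefix e : V e -> exists s, prefixes e (rcons s e).
Proof.
case=> u Mu eu; case/splitPr: u / eu Mu => u1 u2 Mu.
by exists u1; split; [exists u1|exists u2; rewrite cat_rcons].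
Qed.

Lemma prefixes_start e : V e -> typ e = pstart P -> prefixes e [:: e].
Proof.
case=> u Mu eu start_e; case/splitPr: u / eu Mu => u1 u2 Mu.
split; first by exists [::].
exists u2; have /matchesP[uI /cat_sorted2[_ tis] L] := Mu.
apply/matchesP; split => // [x xs|]; first by apply: uI; rewrite mem_cat xs orbT.
have [w' eqw] := lang_pstart L; rewrite map_cat /= in L.
apply: (lang_splice (x := [::]) (y := w') wfP _ L).
by rewrite /= start_e -eqw map_cat.
Qed.

Lemma prefixes_rcons e p s : Pr e p -> prefixes p s -> prefixes e (rcons s e).
Proof.
move=> [_ [u Mu [u1 [u2 equ]]]] [[s0 ->] [t Mt]]; subst u.
split; first by exists (rcons s0 p).
rewrite cat_rcons in Mt; exists u2; rewrite !cat_rcons.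
exact: matches_splice Mt Mu.
Qed.

Lemma prefixesE e : V e -> prefixes e =
  (if typ e == pstart P then [set [:: e]] else set0) `|`
  \bigcup_(p in Pr e) (rcons^~ e) @` prefixes p.
Proof.
move=> Ve; apply/seteqP; split => [s [[s0 ->] [t Mt]]|s].
- case/lastP: s0 Mt => [|s1 p] Mt.
    have /matchesP[_ _ /lang_pstart[w' [start_e _]]] := Mt.
    by left; rewrite start_e eqxx.
  right; exists p; last by exists (rcons s1 p) => //; split;
    [exists s1|exists (e :: t); rewrite -cat_rcons].
  have pt : p \in rcons (rcons s1 p) e ++ t.
    by rewrite mem_cat mem_rcons inE mem_rcons mem_head orbT.
  split; first by exists (rcons (rcons s1 p) e ++ t).
  by exists (rcons (rcons s1 p) e ++ t) => //; exists s1, t; rewrite !cat_rcons.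
- case=> [|[p pe [s' s'p <-]]]; last exact: prefixes_rcons pe s'p.
  by case: eqP => // start_e ->; apply: prefixes_start.
Qed.

Lemma prefixes_last e e' s : prefixes e s -> prefixes e' s -> e = e'.
Proof. by move=> [[s0 ->] _] [[s1 /rcons_inj[_ ->]] _]. Qed.

Lemma trivIset_prefixes (D : set Ev) : trivIset D prefixes.
Proof. by move=> e e' _ _ [s [/prefixes_last]]; apply. Qed.

Lemma fsbig_prefixes (R : Type) (idx : R) (op : Monoid.com_law idx)
    (f : seq Ev -> R) e : V e ->
  \big[op/idx]_(s \in prefixes e) f s =
  op (if typ e == pstart P then f [:: e] else idx)
     (\big[op/idx]_(p \in Pr e) \big[op/idx]_(s \in prefixes p) f (rcons s e)).
Proof.
have finB p : finite_set ((rcons^~ e) @` prefixes p).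
  exact/finite_image/finite_prefixes.
move=> Ve; rewrite prefixesE // fsbigU0.
- congr (op _ _); first by case: ifP; rewrite ?fsbig_set1 ?fsbig_set0.
  rewrite fsbig_bigcup //.
  + by apply: eq_fsbigr => p _; apply: fsbig_image => s1 s2 _ _ /rcons_inj[].
  + exact: finite_preds.
  + move=> p p' _ _ [_ [[s ps <-] [s' sp' /rcons_inj[eqs]]]].
    by apply: prefixes_last ps _; rewrite -eqs.
- by case: ifP => _; [apply: finite_set1|apply: finite_set0].
- exact: bigcup_finite (finite_preds e) _.
- move=> s [+ [p _ [_ [[s0 ->] _] eqs]]]; rewrite -eqs.
  by case: ifP => // _ /(congr1 size); rewrite !size_rcons.
Qed.

Definition prefix_events (E : T) e : set Ev :=
  [set x | typ x = E /\ exists2 s, prefixes e s & x \in s].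

Lemma prefix_eventsE E e : V e -> prefix_events E e =
  (if typ e == E then [set e] else set0) `|` \bigcup_(p in Pr e) prefix_events E p.
Proof.
move=> Ve; apply/seteqP; split => [x [Ex [s]]|x].
- rewrite prefixesE // => -[|[p pe [s' s'p <-]]].
    by case: ifP => // _ -> /[!inE] /eqP ex; left; rewrite -ex Ex eqxx.
  rewrite mem_rcons inE => /orP[/eqP ex|xs']; first by left; rewrite -ex Ex eqxx.
  by right; exists p => //; split => //; exists s'.
- case=> [|[p pe [Ex [s sp xs]]]].
    case: ifP => // /eqP Ee ->; split => //.
    by have [s es] := vertex_prefix Ve; exists (rcons s e); rewrite ?mem_rcons ?mem_head.
  split => //; exists (rcons s e); first exact: prefixes_rcons pe sp.
  by rewrite mem_rcons inE xs orbT.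
Qed.

Lemma trendsE : trends typ time I P = \bigcup_(e in End) prefixes e.
Proof.
apply/seteqP; split=> [s Ms|s [e [Ve end_e] [[s0 ->] [t Mt]]]].
- have /matchesP[_ _ L] := Ms.
  case/lastP: s Ms L => [_ L|s0 e Ms L]; first by case: (lang_neq_nil L).
  have [w' /esym] := lang_pend L; rewrite map_rcons => /rcons_inj[_ end_e].
  exists e; last by split; [exists s0|exists [::]; rewrite cats0].
  by split=> //; exists (rcons s0 e) => //; rewrite mem_rcons mem_head.
- have /matchesP[stI /cat_sorted2[sti _] L] := Mt.
  apply/matchesP; split => // [x xs|]; first by apply: stI; rewrite mem_cat xs.
  have [w' eqw] := lang_pend L; rewrite map_cat map_rcons cat_rcons in L.
  rewrite map_rcons -cats1; apply: (lang_splice (x' := w') wfP L).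
  by rewrite cats1 end_e -eqw map_cat map_rcons cat_rcons.
Qed.

Lemma trend_eventsE E :
  [set x | typ x = E /\ exists2 s, matches P s & x \in s] =
  \bigcup_(e in End) prefix_events E e.
Proof.
apply/seteqP; split => [x [Ex [s Ms xs]]|x [e ende [Ex [s es xs]]]].
  have : trends typ time I P s := Ms; rewrite trendsE => -[e ende es].
  by exists e => //; split => //; exists s.
split => //; exists s => //.
suff Ts : trends typ time I P s by exact: Ts.
by rewrite trendsE; exists e.
Qed.

Section Aggregates.
Variables (E : T) (cnt cntE : Ev -> nat).
Variables (R : realType) (attr : Ev -> R) (sm : Ev -> R) (mn mx : Ev -> \bar R).

Hypothesis cnt_rec : forall e, V e ->
  cnt e = ((typ e == pstart P) : nat) + \big[addn/0%N]_(p \in Pr e) cnt p.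

Lemma cnt_prefixes e : V e -> cnt e = \big[addn/0%N]_(s \in prefixes e) 1%N.
Proof.
move: e; apply: greta_vertex_ind => e Ve IH.
rewrite cnt_rec // fsbig_prefixes //; congr (_ + _).
by apply: eq_fsbigr => p /set_mem pe; apply: IH.
Qed.

Hypothesis cntE_rec : forall e, V e ->
  cntE e = if typ e == E then (cnt e + \big[addn/0%N]_(p \in Pr e) cntE p)%N
           else \big[addn/0%N]_(p \in Pr e) cntE p.

Lemma cntE_prefixes e : V e ->
  cntE e = \big[addn/0%N]_(s \in prefixes e) count (fun x => typ x == E) s.
Proof.
move: e; apply: greta_vertex_ind => e Ve IH.
have extend p : Pr e p ->
    \big[addn/0%N]_(s \in prefixes p) count (fun x => typ x == E) (rcons s e) =
    (cntE p + (typ e == E) * cnt p)%N.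
  move=> pe; have Vp : V p by case: pe.
  rewrite IH // cnt_prefixes // fsbig_distrr; last exact: finite_prefixes.
  rewrite -fsbig_split; last exact: finite_prefixes.
  by apply: eq_fsbigr => s _; rewrite -cats1 count_cat /= addn0 muln1.
rewrite cntE_rec // fsbig_prefixes //.
under eq_fsbigr => p pe do rewrite (extend p (set_mem pe)).
rewrite fsbig_split; last exact: finite_preds.
rewrite -fsbig_distrr; last exact: finite_preds.
rewrite cnt_rec //= addn0.
by case: (typ e == E); case: (typ e == pstart P) => /=; lia.
Qed.

Hypothesis sm_rec : forall e, V e ->
  sm e = if typ e == E then attr e * (cnt e)%:R + \sum_(p \in Pr e) sm p
         else \sum_(p \in Pr e) sm p.

Lemma sm_prefixes e : V e ->
  sm e = \sum_(s \in prefixes e) \sum_(x <- s | typ x == E) attr x.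
Proof.
move: e; apply: greta_vertex_ind => e Ve IH.
have extend p : Pr e p ->
    \sum_(s \in prefixes p) \sum_(x <- rcons s e | typ x == E) attr x =
    sm p + (if typ e == E then attr e else 0) * (cnt p)%:R.
  move=> pe; have Vp : V p by case: pe.
  rewrite IH // cnt_prefixes // natr_fsbig; last exact: finite_prefixes.
  rewrite mulr_fsumr -fsbig_split; last exact: finite_prefixes.
  by apply: eq_fsbigr => s _; rewrite big_rcons mulr1.
rewrite sm_rec // fsbig_prefixes //.
under eq_fsbigr => p pe do rewrite (extend p (set_mem pe)).
rewrite fsbig_split; last exact: finite_preds.
rewrite -mulr_fsumr -natr_fsbig; last exact: finite_preds.
rewrite cnt_rec // natrD big_cons big_nil.
by case: (typ e == E); case: (typ e == pstart P) => /=; ring.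
Qed.

Local Notation attrE := (fun x => (attr x)%:E).

Hypothesis mn_rec : forall e, V e ->
  mn e = if typ e == E then ereal_inf ([set (attr e)%:E] `|` mn @` Pr e)
         else ereal_inf (mn @` Pr e).

Lemma mn_prefixes e : V e -> mn e = ereal_inf (attrE @` prefix_events E e).
Proof.
move: e; apply: greta_vertex_ind => e Ve IH.
rewrite mn_rec // prefix_eventsE // image_setU image_bigcup ereal_inf_setU_bigcup.
rewrite (eq_imagel IH).
by case: eqP => _; rewrite ?image_set1 ?image_set0 ?set0U.
Qed.

Hypothesis mx_rec : forall e, V e ->
  mx e = if typ e == E then ereal_sup ([set (attr e)%:E] `|` mx @` Pr e)
         else ereal_sup (mx @` Pr e).

Lemma mx_prefixes e : V e -> mx e = ereal_sup (attrE @` prefix_events E e).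
Proof.
move: e; apply: greta_vertex_ind => e Ve IH.
rewrite mx_rec // prefix_eventsE // image_setU image_bigcup ereal_sup_setU_bigcup.
rewrite (eq_imagel IH).
by case: eqP => _; rewrite ?image_set1 ?image_set0 ?set0U.
Qed.

Lemma agg_COUNT_end_vertices :
  agg_COUNT typ time I P E = \big[addn/0%N]_(e \in End) cntE e.
Proof.
rewrite /agg_COUNT trendsE fsbig_bigcup.
- by apply: eq_fsbigr => e /set_mem[Ve _]; rewrite cntE_prefixes.
- exact: finite_end_vertices.
- by move=> e _; apply: finite_prefixes.
- exact: trivIset_prefixes.
Qed.

Lemma agg_SUM_end_vertices :
  agg_SUM typ time I attr P E = \sum_(e \in End) sm e.
Proof.
rewrite /agg_SUM trendsE fsbig_bigcup.
- by apply: eq_fsbigr => e /set_mem[Ve _]; rewrite sm_prefixes.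
- exact: finite_end_vertices.
- by move=> e _; apply: finite_prefixes.
- exact: trivIset_prefixes.
Qed.

Lemma agg_MIN_end_vertices :
  agg_MIN typ time I attr P E = ereal_inf (mn @` End).
Proof.
rewrite /agg_MIN trend_eventsE image_bigcup -[X in ereal_inf X]set0U.
rewrite ereal_inf_setU_bigcup set0U; congr ereal_inf.
by apply: eq_imagel => e [Ve _]; rewrite mn_prefixes.
Qed.

Lemma agg_MAX_end_vertices :
  agg_MAX typ time I attr P E = ereal_sup (mx @` End).
Proof.
rewrite /agg_MAX trend_eventsE image_bigcup -[X in ereal_sup X]set0U.
rewrite ereal_sup_setU_bigcup set0U; congr ereal_sup.
by apply: eq_imagel => e [Ve _]; rewrite mx_prefixes.
Qed.

End Aggregates.

End Trends.

Theorem theorem8 (T : eqType) (Ev : choiceType) (typ : Ev -> T) (time : Ev -> rat)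
  (I : seq Ev) (R : realType) (attr : Ev -> R) (P : pattern T) (E : T)
  (cnt cntE : Ev -> nat) (mn mx : Ev -> \bar R) (sm : Ev -> R) :
  wf_pattern P ->
  uniq I ->
  sorted (fun x y => time x <= time y) I ->
  (forall e, e \in I -> 0 <= time e) ->
  let V := greta_vertex typ time I P in
  let Pr := preds typ time I P in
  let End := end_vertices typ time I P in
  (forall e, V e ->
     cnt e = ((typ e == pstart P) : nat) + \big[addn/0%N]_(p \in Pr e) cnt p) ->
  (forall e, V e ->
     cntE e = if typ e == E then (cnt e + \big[addn/0%N]_(p \in Pr e) cntE p)%N
              else \big[addn/0%N]_(p \in Pr e) cntE p) ->
  (forall e, V e ->
     mn e = if typ e == E then ereal_inf ([set (attr e)%:E] `|` mn @` Pr e)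
            else ereal_inf (mn @` Pr e)) ->
  (forall e, V e ->
     mx e = if typ e == E then ereal_sup ([set (attr e)%:E] `|` mx @` Pr e)
            else ereal_sup (mx @` Pr e)) ->
  (forall e, V e ->
     sm e = if typ e == E then attr e * (cnt e)%:R + \sum_(p \in Pr e) sm p
            else \sum_(p \in Pr e) sm p) ->
  [/\ agg_COUNT typ time I P E = \big[addn/0%N]_(e \in End) cntE e,
      agg_MIN typ time I attr P E = ereal_inf (mn @` End),
      agg_MAX typ time I attr P E = ereal_sup (mx @` End),
      agg_SUM typ time I attr P E = \sum_(e \in End) sm e
    & agg_AVG typ time I attr P E =
        (\sum_(e \in End) sm e) / (\big[addn/0%N]_(e \in End) cntE e)%:R].
Proof.
move=> wfP _ _ _ V Pr End cnt_rec cntE_rec mn_rec mx_rec sm_rec.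
have agg_COUNT_end := agg_COUNT_end_vertices wfP cnt_rec cntE_rec.
have agg_SUM_end := agg_SUM_end_vertices wfP cnt_rec sm_rec.
have agg_MIN_end := agg_MIN_end_vertices wfP mn_rec.
have agg_MAX_end := agg_MAX_end_vertices wfP mx_rec.
by split => //; rewrite /agg_AVG agg_COUNT_end agg_SUM_end.
Qed.
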